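(* Let $\phi_1,\dots,\phi_N$ be random features drawn from a distribution with mean $\mu_\phi$, and set $\Delta_\phi := \max_{\phi} \|\phi-\mu_\phi\|_2$, the maximum taken over the distribution's support. Let $a_1,\dots,a_N$ be real parameters with $a_i \in [\alpha,\beta]$ for all $i$, where $0<\alpha<\beta$ (any sign having been absorbed into $\phi_i$). Consider the network $\Phi = \sum_{i=1}^N a_i \phi_i$ and write $\xi := \beta-\alpha$. Suppose $\|\phi_i\|_2 \le \delta$ for every $i$. Fix $P \subseteq \{1,\dots,N\}$ with $|P| = M < N$ and define the pruned network $\Phi_M := \sum_{i \notin P} a_i \phi_i$ and the renormalized pruned network $\widehat\Phi_M := \frac{N}{N-M}\Phi_M$. Then $$\|\Phi - \widehat\Phi_M\|_2 \le 2\beta\,\Delta_\phi\, M + \xi(\beta+\alpha)\,\delta\, M/\alpha.$$ Consequently $\|\Phi - \widehat\Phi_M\|_2 = O(\Delta_\phi + \xi)$ as $\Delta_\phi + \xi \to 0$, so the error tends to $0$ as the random variables $\phi_i$ and $a_i$ concentrate.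
   Context: The network is modeled as a linear combination of features: for an input $x$, $\Phi(x) = \sum_i a_i \phi_i(x)$, where $\phi_i$ is a feature (embedding) and $a_i$ is a parameter. All norms are $2$-norms. ''Pruning'' sets the $M$ parameters indexed by $P$ to zero. Those indices need not be the ones with the smallest $a_i$. Renormalization then rescales the remaining network by $N/(N-M)$, where $N$ is the number of nonzero parameters before pruning. *)

(* Features live in R^d, represented as row vectors 'rV[R]_d
   over a real closed field R (so that Num.sqrt is available). *)
From HB Require Import structures.
From mathcomp Require Import all_boot all_order all_algebra.
Set Implicit Arguments. Unset Strict Implicit. Unset Printing Implicit Defensive.
Import Order.TTheory GRing.Theory Num.Theory.
Local Open Scope ring_scope.

Definition norm2 (R : rcfType) (d : nat) (v : 'rV[R]_d) : R :=
  Num.sqrt (\sum_(j < d) v ord0 j ^+ 2).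

Definition network (R : rcfType) (d N : nat) (a : 'I_N -> R)
  (phi : 'I_N -> 'rV[R]_d) : 'rV[R]_d :=
  \sum_(i < N) a i *: phi i.

Definition pruned (R : rcfType) (d N : nat) (a : 'I_N -> R)
  (phi : 'I_N -> 'rV[R]_d) (P : {set 'I_N}) : 'rV[R]_d :=
  \sum_(i < N | i \notin P) a i *: phi i.

Definition renormalized (R : rcfType) (d N : nat) (a : 'I_N -> R)
  (phi : 'I_N -> 'rV[R]_d) (P : {set 'I_N}) : 'rV[R]_d :=
  (N%:R / (N - #|P|)%:R) *: pruned a phi P.

From HB Require Import structures.
From mathcomp Require Import all_boot all_order all_algebra.
From mathcomp Require Import ring lra.

(* The renormalization error is a difference of two nonnegative combinations
   of the features, [sum_(i in P) a_i phi_i - k sum_(i notin P) a_i phi_i] with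
   [k = M / (N - M)], whose total weights both lie in [[M alpha, M beta]].
   Scaling the heavier combination down to the weight [B] of the lighter one
   leaves two combinations of weight [B], each within [B Delta] of [B mu] since
   every feature is within [Delta] of [mu], plus a residual of weight at most
   [M (beta - alpha)] and hence of norm at most [M (beta - alpha) delta]. *)

Set Implicit Arguments.
Unset Strict Implicit.
Unset Printing Implicit Defensive.
Import Order.TTheory GRing.Theory Num.Theory.
Local Open Scope ring_scope.

Section EuclideanNorm.
Variables (R : rcfType) (d : nat).
Implicit Types (u v : 'rV[R]_d) (k : R).

Definition dot u v : R := \sum_(j < d) u ord0 j * v ord0 j.

Lemma dotC u v : dot u v = dot v u.
Proof. by apply: eq_bigr => j _; rewrite mulrC. Qed.

Lemma dot_ge0 u : 0 <= dot u u.
Proof. by apply: sumr_ge0 => j _; rewrite -expr2 sqr_ge0. Qed.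

Lemma norm2E u : norm2 u = Num.sqrt (dot u u).
Proof. by []. Qed.

Lemma norm2_ge0 u : 0 <= norm2 u.
Proof. exact: sqrtr_ge0. Qed.

Lemma sqr_norm2 u : norm2 u ^+ 2 = dot u u.
Proof. by rewrite sqr_sqrtr ?dot_ge0. Qed.

Lemma norm2Z k u : norm2 (k *: u) = `|k| * norm2 u.
Proof.
rewrite !norm2E /dot; under eq_bigr do rewrite mxE -expr2 exprMn expr2.
by rewrite -mulr_sumr sqrtrM ?sqr_ge0 // sqrtr_sqr.
Qed.

Lemma norm2N u : norm2 (- u) = norm2 u.
Proof. by rewrite -scaleN1r norm2Z normrN normr1 mul1r. Qed.

Lemma norm2_eq0_dot u v : norm2 u = 0 -> dot u v = 0.
Proof.
move/eqP; rewrite sqrtr_eq0 => uu_le0.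
have uu0 : dot u u = 0 by apply/eqP; rewrite eq_le uu_le0 dot_ge0.
rewrite /dot big1 // => j _.
have /eqP : u ord0 j ^+ 2 = 0.
  by apply: (psumr_eq0P (P := predT) _ uu0) => // i _; rewrite -expr2 sqr_ge0.
by rewrite sqrf_eq0 => /eqP ->; rewrite mul0r.
Qed.

(* Cauchy-Schwarz, from [0 <= sum_j (q u_j - p v_j)^2 = 2 p q (p q - dot u v)]
   with [p = norm2 u] and [q = norm2 v]. *)
Lemma dot_le_norm2 u v : dot u v <= norm2 u * norm2 v.
Proof.
have [u0|u_neq0] := eqVneq (norm2 u) 0; first by rewrite norm2_eq0_dot // u0 mul0r.
have [v0|v_neq0] := eqVneq (norm2 v) 0.
  by rewrite dotC norm2_eq0_dot // v0 mulr0.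
set p := norm2 u; set q := norm2 v.
have p_gt0 : 0 < p by rewrite lt_def u_neq0 norm2_ge0.
have q_gt0 : 0 < q by rewrite lt_def v_neq0 norm2_ge0.
have : 0 <= \sum_(j < d) (q * u ord0 j - p * v ord0 j) ^+ 2.
  by apply: sumr_ge0 => j _; rewrite sqr_ge0.
have -> : \sum_(j < d) (q * u ord0 j - p * v ord0 j) ^+ 2
          = q ^+ 2 * dot u u - 2 * p * q * dot u v + p ^+ 2 * dot v v.
  rewrite /dot !mulr_sumr -sumrB -big_split /=.
  by apply: eq_bigr => j _; ring.
rewrite -!sqr_norm2 -/p -/q => h.
have : 0 <= (2 * p * q) * (p * q - dot u v) by lra.
by rewrite pmulr_rge0 ?subr_ge0 // !mulr_gt0.
Qed.

Lemma norm2D_le u v : norm2 (u + v) <= norm2 u + norm2 v.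
Proof.
rewrite -[leRHS]ger0_norm ?addr_ge0 ?norm2_ge0 // -sqrtr_sqr.
rewrite norm2E ler_sqrt ?sqr_ge0 //.
have -> : dot (u + v) (u + v) = dot u u + 2 * dot u v + dot v v.
  rewrite /dot mulr_sumr -!big_split /=.
  by apply: eq_bigr => j _; rewrite !mxE; ring.
have := dot_le_norm2 u v; rewrite -!sqr_norm2; lra.
Qed.

Lemma norm2_sum_le (I : finType) (Q : pred I) (x : I -> 'rV[R]_d) :
  norm2 (\sum_(i | Q i) x i) <= \sum_(i | Q i) norm2 (x i).
Proof.
apply: (big_ind2 (fun u c => norm2 u <= c)) => [|u1 u2 c1 c2 h1 h2|//].
- by rewrite -(scale0r (0 : 'rV[R]_d)) norm2Z normr0 mul0r.
- exact: le_trans (norm2D_le _ _) (lerD h1 h2).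
Qed.

Lemma norm2_wsum_le (I : finType) (Q : pred I) (w : I -> R)
    (x : I -> 'rV[R]_d) (c : R) :
  (forall i, 0 <= w i) -> (forall i, norm2 (x i) <= c) ->
  norm2 (\sum_(i | Q i) w i *: x i) <= (\sum_(i | Q i) w i) * c.
Proof.
move=> w_ge0 x_le; apply: le_trans (norm2_sum_le _ _) _.
rewrite mulr_suml; apply: ler_sum => i _.
by rewrite norm2Z ger0_norm // ler_wpM2l.
Qed.

End EuclideanNorm.

Section WeightedSums.
Variables (R : rcfType) (d : nat) (I : finType).
Variables (phi : I -> 'rV[R]_d) (mu : 'rV[R]_d) (Delta delta : R).
Hypothesis phi_near_mu : forall i, norm2 (phi i - mu) <= Delta.
Hypothesis phi_bounded : forall i, norm2 (phi i) <= delta.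

Lemma wsum_sub_center (Q : pred I) (w : I -> R) :
  \sum_(i | Q i) w i *: phi i - (\sum_(i | Q i) w i) *: mu
  = \sum_(i | Q i) w i *: (phi i - mu).
Proof. by rewrite scaler_suml -sumrB; apply: eq_bigr => i _; rewrite scalerBr. Qed.

(* With [s A = B], the difference splits as
   [s (X - A mu) - (Y - B mu) + (1 - s) X]: two centred sums of total weight
   [B] each, and a residual of weight [A - B]. *)
Lemma norm2_wsumB_le_of_le (P Q : pred I) (p q : I -> R) :
  (forall i, 0 <= p i) -> (forall i, 0 <= q i) ->
  \sum_(i | Q i) q i <= \sum_(i | P i) p i ->
  norm2 (\sum_(i | P i) p i *: phi i - \sum_(i | Q i) q i *: phi i)
    <= 2 * (\sum_(i | Q i) q i) * Delta
       + (\sum_(i | P i) p i - \sum_(i | Q i) q i) * delta.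
Proof.
move=> p_ge0 q_ge0.
set A := \sum_(i | P i) p i; set B := \sum_(i | Q i) q i.
set X := \sum_(i | P i) p i *: phi i; set Y := \sum_(i | Q i) q i *: phi i.
move=> BA.
have B_ge0 : 0 <= B by apply: sumr_ge0.
have A_ge0 : 0 <= A by apply: le_trans BA.
pose s := B / A.
have sA : s * A = B.
  have [A0|A_neq0] := eqVneq A 0; last by rewrite divfK.
  by rewrite A0 mulr0; apply/eqP; rewrite eq_le B_ge0 -A0 BA.
have s_ge0 : 0 <= s by rewrite divr_ge0.
have s_le1 : s <= 1.
  have [A0|A_neq0] := eqVneq A 0; first by rewrite /s A0 invr0 mulr0 ler01.
  by rewrite ler_pdivrMr ?mul1r // lt_def A_neq0.
have -> : X - Y = s *: (X - A *: mu) - (Y - B *: mu) + (1 - s) *: X.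
  rewrite scalerBr scalerA sA scalerBl scale1r opprB.
  by rewrite [RHS]addrC !addrA !subrK.
have hX : norm2 (s *: (X - A *: mu)) <= B * Delta.
  rewrite norm2Z ger0_norm // wsum_sub_center -sA -mulrA.
  by apply: ler_wpM2l => //; exact: norm2_wsum_le.
have hY : norm2 (Y - B *: mu) <= B * Delta.
  by rewrite wsum_sub_center; exact: norm2_wsum_le.
have hR : norm2 ((1 - s) *: X) <= (A - B) * delta.
  rewrite norm2Z ger0_norm ?subr_ge0 // -sA -{1}[A]mul1r -mulrBl -mulrA.
  by apply: ler_wpM2l; rewrite ?subr_ge0 //; exact: norm2_wsum_le.
have := norm2D_le (s *: (X - A *: mu) - (Y - B *: mu)) ((1 - s) *: X).
have := norm2D_le (s *: (X - A *: mu)) (- (Y - B *: mu)).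
rewrite norm2N; lra.
Qed.

Lemma norm2_wsumB_le (P Q : pred I) (p q : I -> R) :
  (forall i, 0 <= p i) -> (forall i, 0 <= q i) ->
  norm2 (\sum_(i | P i) p i *: phi i - \sum_(i | Q i) q i *: phi i)
    <= 2 * Num.min (\sum_(i | P i) p i) (\sum_(i | Q i) q i) * Delta
       + `|\sum_(i | P i) p i - \sum_(i | Q i) q i| * delta.
Proof.
move=> p_ge0 q_ge0.
have [BA|AB] := leP (\sum_(i | Q i) q i) (\sum_(i | P i) p i).
  by rewrite ger0_norm ?subr_ge0 //; exact: norm2_wsumB_le_of_le.
rewrite ltr0_norm ?subr_lt0 // !opprB -norm2N opprB.
exact: norm2_wsumB_le_of_le (ltW AB).
Qed.

End WeightedSums.

Lemma sum_card_bounds (R : realDomainType) (I : finType) (A : {pred I})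
    (w : I -> R) (lo hi : R) :
  (forall i, lo <= w i <= hi) ->
  #|A|%:R * lo <= \sum_(i in A) w i <= #|A|%:R * hi.
Proof.
move=> w_bounds; rewrite !mulr_natl -!sumr_const.
by apply/andP; split; apply: ler_sum => i _; case/andP: (w_bounds i).
Qed.

(* The renormalization factor splits as [N / (N - M) = 1 + M / (N - M)]. *)
Lemma network_sub_renormalized (R : rcfType) (d N : nat) (a : 'I_N -> R)
    (phi : 'I_N -> 'rV[R]_d) (P : {set 'I_N}) :
  (#|P| < N)%N ->
  network a phi - renormalized a phi P
  = \sum_(i in P) a i *: phi i
    - \sum_(i in ~: P) (#|P|%:R / (N - #|P|)%:R * a i) *: phi i.
Proof.
rewrite /network /renormalized /pruned.
set M := #|P|; set k := M%:R / (N - M)%:R => MN.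
have NM_neq0 : (N - M)%:R != 0 :> R by rewrite pnatr_eq0 subn_eq0 -ltnNge.
have -> : N%:R / (N - M)%:R = 1 + k.
  by rewrite -[in N%:R](subnK (ltnW MN)) natrD mulrDl divff // addrC.
rewrite (bigID (mem P)) /=.
rewrite scalerDl scale1r opprD addrA addrK scaler_sumr.
by congr (_ - _); apply: eq_big => [i|i _]; rewrite ?in_setC ?scalerA.
Qed.

Lemma renormalized_mass_bounds (R : realFieldType) (N : nat) (a : 'I_N -> R)
    (P : {set 'I_N}) (alpha beta : R) :
  (#|P| < N)%N -> (forall i, alpha <= a i <= beta) ->
  #|P|%:R * alpha <= \sum_(i in ~: P) #|P|%:R / (N - #|P|)%:R * a i
                  <= #|P|%:R * beta.
Proof.
set M := #|P|; set k := M%:R / (N - M)%:R => MN a_bounds.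
have k_ge0 : 0 <= k by rewrite divr_ge0.
have kNM : (N - M)%:R * k = M%:R.
  by rewrite mulrC divfK // pnatr_eq0 subn_eq0 -ltnNge.
have /(sum_card_bounds (~: P)) : forall i, k * alpha <= k * a i <= k * beta.
  by move=> i; case/andP: (a_bounds i) => lo hi; rewrite !ler_wpM2l.
by rewrite cardsCs setCK card_ord !(mulrA _ k) kNM.
Qed.

Theorem theorem1 (R : rcfType) (d N M : nat)
  (S : pred 'rV[R]_d) (mu : 'rV[R]_d) (Delta : R)
  (hDelta : forall x, x \in S -> norm2 (x - mu) <= Delta)
  (phi : 'I_N -> 'rV[R]_d) (hphiS : forall i, phi i \in S)
  (a : 'I_N -> R) (alpha beta delta : R)
  (halpha : 0 < alpha) (hab : alpha < beta)
  (ha : forall i, alpha <= a i <= beta)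
  (hdelta : forall i, norm2 (phi i) <= delta)
  (P : {set 'I_N}) (hPM : #|P| = M) (hMN : (M < N)%N) :
  norm2 (network a phi - renormalized a phi P)
    <= 2 * beta * Delta * M%:R
       + (beta - alpha) * (beta + alpha) * delta * M%:R / alpha.
Proof.
subst M.
have phi_near_mu i : norm2 (phi i - mu) <= Delta by exact: hDelta.
have i0 : 'I_N := Ordinal (leq_ltn_trans (leq0n #|P|) hMN).
have Delta_ge0 : 0 <= Delta := le_trans (norm2_ge0 _) (phi_near_mu i0).
have delta_ge0 : 0 <= delta := le_trans (norm2_ge0 _) (hdelta i0).
have a_ge0 i : 0 <= a i by case/andP: (ha i) => /(le_trans (ltW halpha)).
rewrite network_sub_renormalized //.
apply: le_trans (norm2_wsumB_le phi_near_mu hdelta _ _ a_ge0 _) _ => [i|].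
  by rewrite mulr_ge0 ?divr_ge0.
have /andP[A_lo A_hi] := sum_card_bounds P ha.
have /andP[B_lo B_hi] := renormalized_mass_bounds hMN ha.
set A := \sum_(i in P) _ in A_lo A_hi *.
set B := \sum_(i in ~: P) _ in B_lo B_hi *.
set M := #|P|%:R in A_lo A_hi B_lo B_hi *.
have min_le : Num.min A B <= M * beta by rewrite ge_min A_hi.
have dist_le : `|A - B| <= M * (beta - alpha).
  by rewrite ler_norml mulrBr; apply/andP; split; lra.
have slack : M * (beta - alpha) <= (beta - alpha) * (beta + alpha) * M / alpha.
  by rewrite ler_pdivlMr //; nra.
have := ler_wpM2r Delta_ge0 min_le.
have := ler_wpM2r delta_ge0 (le_trans dist_le slack).
lra.
Qed.
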